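(* Let $\mathbb{K}$ be a field with $|\mathbb{K}|>2$ and let $(X,Z,\Xi,\Theta)$ be a dual split pre-Veronese set. If $p_1,p_2\in X\cup Z$ are non-collinear, then there is a unique member of $\Xi\cup\Theta$ containing both $p_1$ and $p_2$.
   Context: Let $\mathbb{K}$ be a field. For integers $R\ge1$, $V\ge -1$, an $(R,V)$-cone is a cone with a $V$-dimensional vertex (empty if $V=-1$) over a non-degenerate hyperbolic quadric in $\mathbb{P}^{2R+1}(\mathbb{K})$; the $(R,V)$-tube is the cone minus its vertex. Let $r,v,r',v'\ge -1$ be integers with $r'>r\ge1$, $d=2r+v+1$, $d'=2r'+v'+1$. Let $X,Z$ be point sets with $X\cup Z$ spanning $\mathbb{P}^N(\mathbb{K})$, $Y:=\langle Z\rangle$; $\Xi$ a family of $(d+1)$-dimensional subspaces with $|\Xi|>1$, $\Theta$ a possibly empty family of $(d'+1)$-dimensional subspaces such that: for $\xi\in\Xi$, $(X\cup Y)\cap\xi$ is an $(r,v)$-cone with vertex $Y\cap\xi$ and $X\cap\xi$ is its tube; for $\theta\in\Theta$, $(X\cup Y)\cap\theta$ is an $(r',v')$-cone $C_\theta$, $Y\cap\theta$ is a generator $M$ of $C_\theta$, $Z\cap\theta$ is the disjoint union of the vertex $V_\theta$ and an $r'$-space of $M$ complementary to $V_\theta$, and $X\cap\theta=C_\theta\setminus M$. A subspace is singular if all its points lie in $X\cup Y$; two points are collinear if the joining line is singular. Axioms: (S1) any two distinct points of $X\cup Z$ lie in a common member of $\Xi\cup\Theta$; (S2) the intersection of two distinct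 members of $\Xi\cup\Theta$ is singular. A dual split pre-Veronese set (pre-DSV) is such a quadruple satisfying (S1) and (S2). *)

(* Projective space P^N(K) is modelled inside the row space
   'rV[K]_(N.+1); subspaces are (row spaces of) matrices, compared with the
   mxalgebra order (A <= B)%MS and equality (A == B)%MS. *)
From HB Require Import structures.
From mathcomp Require Import all_boot all_order all_algebra.
Set Implicit Arguments. Unset Strict Implicit. Unset Printing Implicit Defensive.
Import Order.TTheory GRing.Theory Num.Theory.
Local Open Scope ring_scope.

Section ProjGeom.
Variables (K : fieldType) (n : nat).
Local Notation vec := 'rV[K]_n.
Local Notation sub := 'M[K]_n.

(* A point set is given by a predicate on vectors; the projective point <u>
   (u nonzero) belongs to it iff some representative of <u> satisfies it. *)
Definition pmem (X : vec -> Prop) (u : vec) : Prop :=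
  u != 0 /\ exists w, X w /\ (w == u)%MS.

Definition pin (m : nat) (S : 'M[K]_(m, n)) (u : vec) : Prop := u != 0 /\ (u <= S)%MS.

Definition in_XY (X : vec -> Prop) (Y : sub) (u : vec) : Prop :=
  pmem X u \/ pin Y u.

Definition singular (X : vec -> Prop) (Y : sub) (S : sub) : Prop :=
  forall u, pin S u -> in_XY X Y u.

Definition collinear (X : vec -> Prop) (Y : sub) (p1 p2 : vec) : Prop :=
  singular X Y (p1 + p2)%MS.

Definition is_span (Z : vec -> Prop) (Y : sub) : Prop :=
  (forall u, pmem Z u -> (u <= Y)%MS) /\
  (forall W : sub, (forall u, pmem Z u -> (u <= W)%MS) -> (Y <= W)%MS).

Definition spans_all (X Z : vec -> Prop) : Prop :=
  forall W : sub, (forall u, pmem X u \/ pmem Z u -> (u <= W)%MS) ->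
    (1%:M <= W)%MS.

Definition hypform (R : nat) (a : 'rV[K]_((R.+1).*2)) : K :=
  \sum_(i < R.+1) a 0 (inord (i.*2)) * a 0 (inord (i.*2).+1).

(* Cone frames: B is a basis (rows) of a subspace; the first 2R+2 rows carry
   the hyperbolic quadric, the last k rows span the vertex (k = V+1, so the
   vertex has projective dimension V). *)
Definition cone_pt (R k : nat) (B : 'M[K]_((R.+1).*2 + k, n)) (u : vec) : Prop :=
  exists c : 'rV[K]_((R.+1).*2 + k),
    u = c *m B /\ u != 0 /\ hypform (lsubmx c) = 0.

Definition vertex (R k : nat) (B : 'M[K]_((R.+1).*2 + k, n)) : 'M[K]_(k, n) :=
  dsubmx B.

Definition generator (R k : nat) (B : 'M[K]_((R.+1).*2 + k, n)) (M : sub) : Prop :=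
  (forall u, pin M u -> cone_pt B u) /\
  (forall M' : sub, (M <= M')%MS -> (forall u, pin M' u -> cone_pt B u) ->
     (M' <= M)%MS).

(* Condition on a member xi of Xi, with R = r, k = v+1:
   xi has projective dimension d+1 = 2r+v+2, (X \cup Y) \cap xi is an
   (r,v)-cone with vertex Y \cap xi, and X \cap xi is its tube. *)
Definition xi_cond (R k : nat) (X : vec -> Prop) (Y : sub) (S : sub) : Prop :=
  \rank S = ((R.+1).*2 + k)%N /\
  exists B : 'M[K]_((R.+1).*2 + k, n),
    [/\ row_free B, (B == S)%MS,
        (forall u, pin S u /\ in_XY X Y u <-> cone_pt B u),
        (forall u, pin S u /\ pin Y u <-> pin (vertex B) u) &
        (forall u, pin S u /\ pmem X u <-> cone_pt B u /\ ~ pin (vertex B) u)].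

(* Condition on a member theta of Theta, with R = r', k = v'+1:
   (X \cup Y) \cap theta is an (r',v')-cone C, Y \cap theta is a generator M
   of C, Z \cap theta is the disjoint union of the vertex and an r'-space W of
   M complementary to the vertex, and X \cap theta = C \ M. *)
Definition theta_cond (R k : nat) (X Z : vec -> Prop) (Y : sub) (S : sub) : Prop :=
  \rank S = ((R.+1).*2 + k)%N /\
  exists B : 'M[K]_((R.+1).*2 + k, n), exists M W : sub,
    [/\ row_free B /\ (B == S)%MS /\
        (forall u, pin S u /\ in_XY X Y u <-> cone_pt B u),
        generator B M /\ (forall u, pin S u /\ pin Y u <-> pin M u),
        [/\ \rank W = R.+1, (W <= M)%MS,
            (forall u, pin W u -> pin (vertex B) u -> False) &
            (vertex B + W == M)%MS],
        (forall u, pin S u /\ pmem Z u <-> pin (vertex B) u \/ pin W u) &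
        (forall u, pin S u /\ pmem X u <-> cone_pt B u /\ ~ pin M u)].

Definition member (Xi Theta : sub -> Prop) (S : sub) : Prop := Xi S \/ Theta S.

(* Dual split pre-Veronese set (X, Z, Xi, Theta), Y := <Z>, with integer
   parameters r, v, r', v' (conversion to nat dimensions inside). *)
Definition preDSV (r v r' v' : int) (X Z : vec -> Prop) (Y : sub)
  (Xi Theta : sub -> Prop) : Prop :=
  [/\ spans_all X Z /\ is_span Z Y,
      (forall S, Xi S -> xi_cond `|r|%N `|(v + 1)%R|%N X Y S)
      /\ (exists S1 S2, [/\ Xi S1, Xi S2 & ~~ (S1 == S2)%MS]),
      (forall S, Theta S -> theta_cond `|r'|%N `|(v' + 1)%R|%N X Z Y S),
      (* (S1) *)
      (forall p1 p2, pmem X p1 \/ pmem Z p1 -> pmem X p2 \/ pmem Z p2 ->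
         ~~ (p1 == p2)%MS ->
         exists S, [/\ member Xi Theta S, (p1 <= S)%MS & (p2 <= S)%MS]) &
      (* (S2) *)
      (forall S1 S2, member Xi Theta S1 -> member Xi Theta S2 ->
         ~~ (S1 == S2)%MS -> singular X Y (S1 :&: S2)%MS)].

End ProjGeom.

From HB Require Import structures.
From mathcomp Require Import all_boot all_order all_algebra.
Set Implicit Arguments. Unset Strict Implicit. Unset Printing Implicit Defensive.
Import Order.TTheory GRing.Theory Num.Theory.
Local Open Scope ring_scope.

(* Existence is axiom (S1), once we know the two points are distinct; they
   are, because a point of X \cup Z is collinear with itself: the "line"
   <p> + <p> is the point <p>, which lies in X \cup Y (points of Z lie in
   Y = <Z>).  Uniqueness follows from (S2): two distinct members containing
   p1 and p2 meet in a singular subspace, which contains the line p1 p2, and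
   subspaces of singular subspaces are singular, so p1 and p2 would be
   collinear. *)

Section PointsAndSingularSubspaces.
Variables (K : fieldType) (n : nat).
Local Notation vec := 'rV[K]_n.
Local Notation sub := 'M[K]_n.

Lemma point_sub_eqmx (u p : vec) :
  u != 0 -> p != 0 -> (u <= p)%MS -> (u == p)%MS.
Proof.
by move=> u0 p0 up; rewrite -(geq_leqif (mxrank_leqif_eq up)) !rank_rV u0 p0.
Qed.

Lemma pmem_eqmx (X : vec -> Prop) (u p : vec) :
  u != 0 -> (u <= p)%MS -> pmem X p -> pmem X u.
Proof.
move=> u0 up [p0 [w [Xw /eqmxP wp]]]; split => //; exists w; split => //.
by apply/eqmxP; apply: eqmx_trans wp (eqmx_sym (eqmxP _)); apply: point_sub_eqmx.
Qed.

Lemma XZ_in_XY (X Z : vec -> Prop) (Y : sub) (p : vec) :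
  is_span Z Y -> pmem X p \/ pmem Z p -> in_XY X Y p.
Proof.
move=> [spanZ _] [Xp|Zp]; first by left.
by right; split; [case: Zp | exact: spanZ].
Qed.

Lemma collinear_eqmx (X : vec -> Prop) (Y : sub) (p q : vec) :
  in_XY X Y p -> (p == q)%MS -> collinear X Y p q.
Proof.
move=> XYp /eqmxP pq u [u0 uS].
have up : (u <= p)%MS.
  by apply: (submx_trans uS); rewrite addsmx_sub -pq submx_refl.
case: XYp => [Xp|[p0 Yp]]; first by left; apply: pmem_eqmx Xp.
by right; split => //; apply: submx_trans Yp.
Qed.

Lemma singular_sub (X : vec -> Prop) (Y S T : sub) :
  (T <= S)%MS -> singular X Y S -> singular X Y T.
Proof.
by move=> TS singS u [u0 uT]; apply: singS; split; last exact: submx_trans TS.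
Qed.

Lemma singular_collinear (X : vec -> Prop) (Y S : sub) (p1 p2 : vec) :
  (p1 <= S)%MS -> (p2 <= S)%MS -> singular X Y S -> collinear X Y p1 p2.
Proof. by move=> p1S p2S; apply: singular_sub; rewrite addsmx_sub p1S. Qed.

End PointsAndSingularSubspaces.

Section ConsequencesOfTheAxioms.
Variables (K : fieldType) (n : nat) (r v r' v' : int).
Variables (X Z : 'rV[K]_n -> Prop) (Y : 'M[K]_n) (Xi Theta : 'M[K]_n -> Prop).
Hypothesis DSV : preDSV r v r' v' X Z Y Xi Theta.

Lemma noncollinear_distinct (p1 p2 : 'rV[K]_n) :
  pmem X p1 \/ pmem Z p1 -> ~ collinear X Y p1 p2 -> ~~ (p1 == p2)%MS.
Proof.
case: DSV => [[_ spanY] _ _ _ _] XZp1 noncol; apply/negP => p12.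
by apply: noncol; apply: collinear_eqmx p12; apply: XZ_in_XY XZp1.
Qed.

Lemma two_members_collinear (S S' : 'M[K]_n) (p1 p2 : 'rV[K]_n) :
  member Xi Theta S -> member Xi Theta S' -> ~~ (S == S')%MS ->
  (p1 <= S)%MS -> (p2 <= S)%MS -> (p1 <= S')%MS -> (p2 <= S')%MS ->
  collinear X Y p1 p2.
Proof.
case: DSV => [_ _ _ _ S2] mS mS' SS' p1S p2S p1S' p2S'.
by apply: singular_collinear (S2 S S' mS mS' SS'); rewrite sub_capmx ?p1S ?p2S.
Qed.

End ConsequencesOfTheAxioms.

Theorem lemma4p2 (K : fieldType) (N : nat) (r v r' v' : int)
  (X Z : 'rV[K]_N.+1 -> Prop) (Y : 'M[K]_N.+1) (Xi Theta : 'M[K]_N.+1 -> Prop) :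
  (exists a : K, a != 0 /\ a != 1) ->
  1 <= r -> r < r' -> -1 <= v -> -1 <= v' ->
  preDSV r v r' v' X Z Y Xi Theta ->
  forall p1 p2 : 'rV[K]_N.+1,
    pmem X p1 \/ pmem Z p1 -> pmem X p2 \/ pmem Z p2 ->
    ~ collinear X Y p1 p2 ->
    exists S, [/\ member Xi Theta S, (p1 <= S)%MS, (p2 <= S)%MS &
      forall S', member Xi Theta S' -> (p1 <= S')%MS -> (p2 <= S')%MS ->
        (S' == S)%MS].
Proof.
move=> _ _ _ _ _ DSV p1 p2 XZp1 XZp2 noncol.
have p12 := noncollinear_distinct DSV XZp1 noncol.
have [_ _ _ S1 _] := DSV.
have [S [mS p1S p2S]] := S1 p1 p2 XZp1 XZp2 p12.
exists S; split => // S' mS' p1S' p2S'.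
apply/negPn/negP => S'S; apply: noncol.
exact: (two_members_collinear DSV mS' mS S'S p1S' p2S' p1S p2S).
Qed.
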